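(* Let $R$ be a principal ideal domain and $n\geq 2$. Let $J$ be the complex of representations of $(Q_{\mathfrak{A}_n},\rho_{\mathfrak{A}_n})$ with $J^{-1}=I_{H_1}\oplus I_{H_2}$, $J^0=\bigoplus_{i=1}^n I_{E_i}\oplus\bigoplus_{i=1}^n I_{P_i}$, $J^1=\bigoplus_{i=1}^n I_{P_i}$, zero elsewhere, with differential $J^{-1}\to J^0$ given by $\begin{pmatrix}\partial^0\\0\end{pmatrix}$ and $J^0\to J^1$ given by $(\partial^1\ \ 0)$, where $\partial^0:I_{H_1}\oplus I_{H_2}\to\bigoplus_i I_{E_i}$ has $E_i$-component $he_{1i}\oplus(-he_{2i})$, and $\partial^1:\bigoplus_j I_{E_j}\to\bigoplus_i I_{P_i}$ has $P_i$-component $e_{ii}$ on $I_{E_i}$, $-e_{(i+1)i}$ on $I_{E_{i+1}}$ and zero on all other summands (indices mod $n$). (This is a resolution of $W_1\oplus\dots\oplus W_n\oplus C[1]$, where $W_i$ has $R$ at $P_i$ and $0$ elsewhere and $C$ has $R$ at every vertex with identity maps.) Then $\operatorname{End} J$ is formal: there are a dg subalgebra $\mathcal{U}\subset\operatorname{End} J$ and a two-sided dg ideal $\mathcal{I}\subset\mathcal{U}$ giving a chain of quasi-isomorphisms of dg algebras $\operatorname{End} J\hookleftarrow\mathcal{U}\twoheadrightarrow\mathcal{U}/\mathcal{I}\hookleftarrow H(\mathcal{U}/\mathcal{I})$.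
   Context: $\mathfrak{A}_n$ ($n\geq 2$) is the stratification of $S^2$ into $n$ points $P_1,\dots,P_n$ in cyclic order on a great circle, the $n$ open arcs $E_1,\dots,E_n$ of that circle, where $E_i$ has endpoints $P_{i-1}$ and $P_i$ (indices mod $n$, so $E_1$ joins $P_n$ and $P_1$), and the two open hemispheres $H_1,H_2$. The quiver $(Q_{\mathfrak{A}_n},\rho_{\mathfrak{A}_n})$ has one vertex per stratum, an arrow $S\to T$ whenever $S\subsetneq\overline T$, and relations identifying all paths with the same endpoints; representations are by $R$-modules. For a stratum $S$, $I_S$ is the representation with $R$ at every vertex $T$ with $T\subset\overline S$ and $0$ elsewhere, identity maps on arrows between copies of $R$, zero otherwise. For $T\subset\overline S$ the canonical morphism $I_S\to I_T$ is the identity of $R$ wherever both have $R$ and zero elsewhere; $he_{ji}:I_{H_j}\to I_{E_i}$ and $e_{ik}:I_{E_i}\to I_{P_k}$ (for $k\in\{i-1,i\}$ mod $n$) denote these canonical morphisms. $\operatorname{End} J$ is the Hom complex of $J$ with its dg algebra structure; a dg algebra is formal if it is connected to its cohomology algebra (zero differential) by a finite chain of quasi-isomorphisms (more generally quasi-equivalences). *)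

From HB Require Import structures.
From mathcomp Require Import all_boot all_order all_algebra.
Set Implicit Arguments. Unset Strict Implicit. Unset Printing Implicit Defensive.
Import Order.TTheory GRing.Theory Num.Theory.
Local Open Scope ring_scope.

Definition is_pid (R : idomainType) : Prop :=
  forall I : R -> Prop,
    I 0 -> (forall x y, I x -> I y -> I (x - y)) -> (forall a x, I x -> I (a * x)) ->
    exists g : R, forall x, I x <-> exists c : R, x = c * g.

Section A.
Variable n : nat.

(* ---------- Strata of A_n (0-based indices, mod n) ----------
   Pt i = P_i, Ed i = E_i with endpoints P_(i-1) and P_i, Hm false = H_1, Hm true = H_2. *)
Inductive strat := Pt of 'I_n | Ed of 'I_n | Hm of bool.

(* stle S T  <=>  S is contained in the closure of T *)
Definition stle (S T : strat) : bool :=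
  match S, T with
  | Pt k, Pt k' => k == k'
  | Pt k, Ed i => (k == i) || (k == ord_pred i)
  | Pt _, Hm _ => true
  | Ed i, Ed i' => i == i'
  | Ed _, Hm _ => true
  | Hm j, Hm j' => j == j'
  | _, _ => false
  end.

Definition stlt (S T : strat) : Prop := stle S T /\ S <> T.
(* arrows of the quiver: S -> T whenever S is strictly contained in closure(T) *)

(* ---------- Summands of the total graded object of J ----------
   inl (inl (inl b)) : I_{H_b} in degree -1
   inl (inl (inr i)) : I_{E_i} in degree 0
   inl (inr i)       : I_{P_i} in degree 0
   inr i             : I_{P_i} in degree 1 *)
Definition summ : finType := (bool + 'I_n + 'I_n + 'I_n)%type.

Definition sm_strat (s : summ) : strat :=
  match s with
  | inl (inl (inl b)) => Hm b
  | inl (inl (inr i)) => Ed i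
  | inl (inr i) => Pt i
  | inr i => Pt i
  end.

Definition sm_deg (s : summ) : int :=
  match s with
  | inl (inl (inl _)) => (-1)%R
  | inl (inl (inr _)) => 0
  | inl (inr _) => 0
  | inr _ => 1
  end.

Definition N : nat := #|summ|.
Definition deg (k : 'I_N) : int := sm_deg (enum_val k).

(* I_S has R at vertex T iff T is in closure(S); so the summand s contributes a copy
   of R to J(T) iff stle T (sm_strat s). *)
Definition supp (T : strat) (k : 'I_N) : bool := stle T (sm_strat (enum_val k)).

Variable R : idomainType.

(* J(T) is the submodule of R^N of vectors supported on supp T; the structure map of the
   arrow T -> T' is the (diagonal) projection onto supp T'. *)
Definition Pi (T : strat) : 'M[R]_N := \matrix_(i, j) (if (i == j) && supp T i then 1 else 0).

(* the differential of J as a matrix on R^N (column convention: entry (target, source)) *)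
Definition Dcoef (tgt src : summ) : R :=
  match src, tgt with
  | inl (inl (inl b)), inl (inl (inr i)) => if b then -1 else 1   (* he_{1i} (+) (-he_{2i}) *)
  | inl (inl (inr j)), inr i =>
      if j == i then 1 else if j == ordS i then -1 else 0           (* e_{ii}, -e_{(i+1)i} *)
  | _, _ => 0
  end.

Definition Dmx : 'M[R]_N := \matrix_(i, j) Dcoef (enum_val i) (enum_val j).

(* differential of J at vertex T (canonical morphisms: identity where both sides have R) *)
Definition dJ (T : strat) : 'M[R]_N := Pi T *m Dmx *m Pi T.

Definition sgn : 'M[R]_N :=
  \matrix_(i, j) (if i == j then (if odd `|deg i|%N then -1 else 1) else 0).

Definition amb := strat -> 'M[R]_N.

(* F is an element of End J = (+)_p prod_k Hom_rep(J^k, J^(k+p)):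
   F_T is an endomorphism of J(T) and F is a morphism of representations. *)
Definition inEnd (F : amb) : Prop :=
  (forall T, F T = Pi T *m F T *m Pi T) /\
  (forall T T', stlt T T' -> Pi T' *m F T *m Pi T = F T' *m Pi T' *m Pi T).

Definition amb0 : amb := fun _ => 0.
Definition ambD (F G : amb) : amb := fun T => F T + G T.
Definition ambB (F G : amb) : amb := fun T => F T - G T.
Definition ambZ (a : R) (F : amb) : amb := fun T => a *: F T.
Definition ambM (F G : amb) : amb := fun T => F T *m G T.
Definition amb1 : amb := fun T => Pi T.

(* differential of End J: delta F = d o F - (-1)^|F| F o d *)
Definition delta (F : amb) : amb := fun T => dJ T *m F T - sgn *m F T *m sgn *m dJ T.

Definition homog (p : int) (F : amb) : Prop :=
  forall T (s t : 'I_N), F T s t != 0 -> deg s = deg t + p.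

Definition comp (p : int) (F : amb) : amb :=
  fun T => \matrix_(s, t) (if deg s == deg t + p then F T s t else 0).

Definition psubset (X Y : amb -> Prop) : Prop := forall x, X x -> Y x.

Definition dg_submod (X : amb -> Prop) : Prop :=
  [/\ X amb0, (forall x y, X x -> X y -> X (ambD x y)),
      (forall a x, X x -> X (ambZ a x)), (forall p x, X x -> X (comp p x))
    & (forall x, X x -> X (delta x))].

Definition dg_subalg (U : amb -> Prop) : Prop :=
  [/\ psubset U inEnd, dg_submod U, U amb1 & (forall x y, U x -> U y -> U (ambM x y))].

Definition dg_ideal (U I : amb -> Prop) : Prop :=
  [/\ psubset I U, dg_submod I, (forall x y, U x -> I y -> I (ambM x y))
    & (forall x y, I x -> U y -> I (ambM x y))].

(* Subquotient complex X/Y (Y inside X), degree p cocycles and coboundaries,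
   described by representatives in X. *)
Definition cocycle (X Y : amb -> Prop) (p : int) (x : amb) : Prop :=
  [/\ X x, homog p x & Y (delta x)].
Definition cobdry (X Y : amb -> Prop) (p : int) (x : amb) : Prop :=
  [/\ X x, homog p x & exists y, [/\ X y, homog (p - 1) y & Y (ambB x (delta y))]].

(* The map X1/Y1 -> X2/Y2 induced by the identity (X1 ⊆ X2, Y1 ⊆ Y2) is a
   quasi-isomorphism: it induces a bijection H^p(X1/Y1) -> H^p(X2/Y2) for every p. *)
Definition qiso (X1 Y1 X2 Y2 : amb -> Prop) : Prop :=
  [/\ psubset X1 X2, psubset Y1 Y2 &
  forall p : int,
    (forall z, cocycle X2 Y2 p z -> exists x, cocycle X1 Y1 p x /\ cobdry X2 Y2 p (ambB z x)) /\
    (forall x, cocycle X1 Y1 p x -> cobdry X2 Y2 p x -> cobdry X1 Y1 p x)].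

Definition zeroP (x : amb) : Prop := x = amb0.

End A.

From Pilot Require Import Defs.
From HB Require Import structures.
From mathcomp Require Import all_boot all_order all_algebra ring zify.
From Stdlib Require Import FunctionalExtensionality Classical.
Set Implicit Arguments. Unset Strict Implicit. Unset Printing Implicit Defensive.
Import Order.TTheory GRing.Theory Num.Theory.
Local Open Scope ring_scope.

(* An element of End J is determined by a single N x N matrix supported on the
   pairs (t, s) with Hom(I_s, I_t) <> 0; its component at a vertex T is the
   compression [Pi T M Pi T].  This embedding [emb] respects sums, products,
   homogeneous components and the differential d M = D M - sgn M sgn D, so all
   dg notions of the statement transfer to classes of matrices ([realizes],
   [embP_submod], [embP_mul], [qiso_emb]).

   All classes are stable
   under homogeneous components, so the quasi-isomorphisms may be checked
   ignoring degrees ([mqiso_of]); each is then given by explicit homotopies. *)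

Section EntryCalculus.
Variables (I : finType) (R : nzRingType).
Local Notation MX := 'M[R]_#|I|.

Definition ent (M : MX) (t s : I) : R := M (enum_rank t) (enum_rank s).
Definition mk (f : I -> I -> R) : MX := \matrix_(i, j) f (enum_val i) (enum_val j).

Lemma entK f t s : ent (mk f) t s = f t s.
Proof. by rewrite /ent /mk mxE !enum_rankK. Qed.

Lemma mx_eq (A B : MX) : (forall t s, ent A t s = ent B t s) -> A = B.
Proof.
move=> h; apply/matrixP => i j.
by have := h (enum_val i) (enum_val j); rewrite /ent !enum_valK.
Qed.

Lemma ent_mul (A B : MX) t s : ent (A *m B) t s = \sum_(u : I) ent A t u * ent B u s.
Proof.
rewrite /ent mxE (reindex (@enum_rank I)) //=.
by apply: onW_bij; apply: enum_rank_bij.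
Qed.

Lemma entD (A B : MX) t s : ent (A + B) t s = ent A t s + ent B t s.
Proof. by rewrite /ent mxE. Qed.
Lemma entN (A : MX) t s : ent (- A) t s = - ent A t s.
Proof. by rewrite /ent mxE. Qed.
Lemma entB (A B : MX) t s : ent (A - B) t s = ent A t s - ent B t s.
Proof. by rewrite entD entN. Qed.
Lemma entZ a (A : MX) t s : ent (a *: A) t s = a * ent A t s.
Proof. by rewrite /ent mxE. Qed.
Lemma ent0 t s : ent (0 : MX) t s = 0.
Proof. by rewrite /ent mxE. Qed.
Lemma ent1 t s : ent (1%:M : MX) t s = (t == s)%:R.
Proof. by rewrite /ent mxE (inj_eq (can_inj (@enum_rankK I))). Qed.

Lemma sum_single (F : I -> R) u0 : (forall u, u != u0 -> F u = 0) -> \sum_u F u = F u0.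
Proof. by move=> h; rewrite (bigD1 u0) //= big1 ?addr0 // => u /h. Qed.

Lemma sum_pair (F : I -> R) u0 u1 : u0 != u1 ->
  (forall u, u != u0 -> u != u1 -> F u = 0) -> \sum_u F u = F u0 + F u1.
Proof.
move=> h01 h; rewrite (bigD1 u0) //= (bigD1 u1) /=; last by rewrite eq_sym.
by rewrite big1 ?addr0 // => u /andP[hu1 hu0]; apply: h.
Qed.

Lemma ent_diagM (d : I -> R) (M : MX) t s :
  ent (mk (fun t s => if t == s then d t else 0) *m M) t s = d t * ent M t s.
Proof.
rewrite ent_mul (sum_single (u0 := t)) ?entK ?eqxx // => u hu.
by rewrite entK eq_sym (negbTE hu) mul0r.
Qed.

Lemma ent_Mdiag (d : I -> R) (M : MX) t s :
  ent (M *m mk (fun t s => if t == s then d t else 0)) t s = ent M t s * d s.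
Proof.
rewrite ent_mul (sum_single (u0 := s)) ?entK ?eqxx // => u hu.
by rewrite entK (negbTE hu) mulr0.
Qed.

Definition supported (pat : rel I) (M : MX) := forall t s, ~~ pat t s -> ent M t s = 0.

Lemma supported_mul (p q r : rel I) A B : supported p A -> supported q B ->
  (forall t u s, p t u -> q u s -> r t s) -> supported r (A *m B).
Proof.
move=> hA hB hpq t s hr; rewrite ent_mul big1 // => u _.
case hp: (p t u); last by rewrite hA ?hp ?mul0r.
case hq: (q u s); last by rewrite hB ?hq ?mulr0.
by rewrite (hpq _ _ _ hp hq) in hr.
Qed.

Lemma ent_mul_single (p q : rel I) A B t s u0 : supported p A -> supported q B ->
  (forall u, u != u0 -> ~~ (p t u && q u s)) ->
  ent (A *m B) t s = ent A t u0 * ent B u0 s.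
Proof.
move=> hA hB hu; rewrite ent_mul (sum_single (u0 := u0)) // => u /hu.
case hp: (p t u) => /=; last by rewrite hA ?hp ?mul0r.
by move=> hq; rewrite hB ?mulr0.
Qed.

Lemma supportedD p A B : supported p A -> supported p B -> supported p (A + B).
Proof. by move=> hA hB t s h; rewrite entD hA ?hB ?addr0. Qed.
Lemma supportedN p A : supported p A -> supported p (- A).
Proof. by move=> hA t s h; rewrite entN hA ?oppr0. Qed.
Lemma supportedB p A B : supported p A -> supported p B -> supported p (A - B).
Proof. by move=> hA hB; apply: supportedD => //; apply: supportedN. Qed.
Lemma supportedZ p a A : supported p A -> supported p (a *: A).
Proof. by move=> hA t s h; rewrite entZ hA ?mulr0. Qed.
Lemma supported0 p : supported p 0.
Proof. by move=> t s _; rewrite ent0. Qed.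
Lemma supported1 (p : rel I) : reflexive p -> supported p 1%:M.
Proof. by move=> hp t s; rewrite ent1; case: eqP => // ->; rewrite hp. Qed.
Lemma supported_sub (p q : rel I) A : subrel p q -> supported p A -> supported q A.
Proof. by move=> hpq hA t s hq; apply: hA; apply: contra hq; apply: hpq. Qed.

End EntryCalculus.

Section Grading.
Variables (I : finType) (R : nzRingType) (dg : I -> int).
Local Notation MX := 'M[R]_#|I|.

Definition mhom (p : int) (M : MX) := forall t s, ent M t s != 0 -> dg t = dg s + p.

Definition mcomp (p : int) (M : MX) : MX :=
  mk (fun t s => if dg t == dg s + p then ent M t s else 0).

Lemma mhomD p A B : mhom p A -> mhom p B -> mhom p (A + B).
Proof.
move=> hA hB t s; rewrite entD.
by case: (eqVneq (ent A t s) 0) => [->|/hA //]; rewrite add0r; apply: hB.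
Qed.
Lemma mhomN p A : mhom p A -> mhom p (- A).
Proof. by move=> hA t s; rewrite entN oppr_eq0; apply: hA. Qed.
Lemma mhomB p A B : mhom p A -> mhom p B -> mhom p (A - B).
Proof. by move=> hA hB; apply: mhomD => //; apply: mhomN. Qed.
Lemma mhom_compq q M : mhom q (mcomp q M).
Proof. by move=> t s; rewrite entK; case: (dg t =P dg s + q) => // _; rewrite eqxx. Qed.

Lemma supported_comp (pat : rel I) p M : supported pat M -> supported pat (mcomp p M).
Proof. by move=> hM t s h; rewrite entK hM ?if_same. Qed.

Lemma ent_comp_diag p M t : ent (mcomp p M) t t = if p == 0 then ent M t t else 0.
Proof. by rewrite entK -{1}[dg t]addr0 (inj_eq (addrI _)) eq_sym. Qed.

Lemma comp_id p M : mhom p M -> mcomp p M = M.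
Proof.
move=> hM; apply: mx_eq => t s; rewrite entK; case: ifP => // /negbT h.
by apply/esym/eqP; apply: (contraNT _ h) => /hM ->.
Qed.

Lemma comp0 p : mcomp p 0 = 0.
Proof. by apply: mx_eq => t s; rewrite entK ent0 if_same. Qed.

Lemma compB p A B : mcomp p (A - B) = mcomp p A - mcomp p B.
Proof. by apply: mx_eq => t s; rewrite entB !entK entB; case: ifP; rewrite ?subr0. Qed.

Lemma comp_mulr a q A B : mhom a A -> mcomp (a + q) (A *m B) = A *m mcomp q B.
Proof.
move=> hA; apply: mx_eq => t s; rewrite entK !ent_mul.
have shift u : ent A t u != 0 -> (dg t == dg s + (a + q)) = (dg u == dg s + q).
  by move=> /hA e; apply/eqP/eqP; lia.
case: ifP => h; [apply: eq_bigr | apply/esym/big1] => u _; rewrite entK;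
  (have [->|/shift <-] := eqVneq (ent A t u) 0; first by rewrite !mul0r); by rewrite h ?mulr0.
Qed.

Lemma comp_mull q b A B : mhom b B -> mcomp (q + b) (A *m B) = mcomp q A *m B.
Proof.
move=> hB; apply: mx_eq => t s; rewrite entK !ent_mul.
have shift u : ent B u s != 0 -> (dg t == dg s + (q + b)) = (dg t == dg u + q).
  by move=> /hB e; apply/eqP/eqP; lia.
case: ifP => h; [apply: eq_bigr | apply/esym/big1] => u _; rewrite entK;
  (have [->|/shift <-] := eqVneq (ent B u s) 0; first by rewrite !mulr0); by rewrite h ?mul0r.
Qed.

End Grading.

Lemma subrACA (V : zmodType) (x y z w : V) : x - y - (z - w) = x - z - (y - w).
Proof. by rewrite !opprB addrACA [RHS]addrACA (addrC (- y)). Qed.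

Lemma inl_eq (A B : eqType) (x y : A) : (inl x == inl y :> A + B) = (x == y).
Proof. by apply/eqP/eqP => [[]|->]. Qed.
Lemma inr_eq (A B : eqType) (x y : B) : (inr x == inr y :> A + B) = (x == y).
Proof. by apply/eqP/eqP => [[]|->]. Qed.
Lemma inlr_eq (A B : eqType) (x : A) (y : B) : (inl x == inr y :> A + B) = false.
Proof. by apply/eqP. Qed.
Lemma inrl_eq (A B : eqType) (x : A) (y : B) : (inr y == inl x :> A + B) = false.
Proof. by apply/eqP. Qed.
Definition eqsm := (inl_eq, inr_eq, inlr_eq, inrl_eq).

Lemma ordS_neq m (hm : (1 < m)%N) (i : 'I_m) : ordS i != i.
Proof.
apply/eqP => /(congr1 val) /=.
case: (ltnP i.+1 m) => h; first by rewrite modn_small // => /eqP; rewrite gtn_eqF.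
have e : i.+1 = m by apply/eqP; rewrite eqn_leq h ltn_ord.
by rewrite e modnn => e0; move: hm; rewrite -e -e0.
Qed.

Lemma pred_ordS m (i k : 'I_m) : (i == ord_pred k) = (k == ordS i).
Proof. by rewrite eq_sym (can2_eq (@ord_predK m) (@ordSK m)). Qed.

Lemma ordS_const m (T : Type) (f : 'I_m -> T) :
  (forall i, f (ordS i) = f i) -> forall i j, f i = f j.
Proof.
move=> h.
suff f0 k (hk : (k < m)%N) (h0 : (0 < m)%N) : f (Ordinal hk) = f (Ordinal h0).
  move=> [i hi] [j hj]; have h0 : (0 < m)%N := leq_ltn_trans (leq0n i) hi.
  by rewrite (f0 i hi h0) (f0 j hj h0).
elim: k hk => [|k IH] hk; first by congr f; apply: val_inj.
have hk' : (k < m)%N by apply: ltnW.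
have -> : Ordinal hk = ordS (Ordinal hk') by apply: val_inj; rewrite /= modn_small.
by rewrite h IH.
Qed.

Lemma sum_ordS m (V : nmodType) (f : 'I_m -> V) :
  \sum_(i < m) f (ordS i) = \sum_(i < m) f i.
Proof. by rewrite [RHS](reindex_inj (can_inj (@ordSK m))). Qed.

Definition tail_sum m (V : nmodType) (r : 'I_m -> V) (i : 'I_m) : V :=
  \sum_(k < m | (i <= k)%N) r k.

Lemma tail_sumP m (V : zmodType) (r : 'I_m -> V) : \sum_(k < m) r k = 0 ->
  forall i, tail_sum r i - tail_sum r (ordS i) = r i.
Proof.
move=> hs i; rewrite /tail_sum (bigD1 i) //=.
case: (ltnP i.+1 m) => h.
  have -> : \sum_(k < m | (i <= k)%N && (k != i)) r k = \sum_(k < m | (i.+1 <= k)%N) r k.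
    by apply: eq_bigl => k; rewrite ltn_neqAle eq_sym andbC -(inj_eq val_inj).
  by rewrite modn_small // addrK.
have e : i.+1 = m by apply/eqP; rewrite eqn_leq h ltn_ord.
rewrite e modnn.
have -> : \sum_(k < m | (0 <= k)%N) r k = 0 by rewrite -[RHS]hs; apply: eq_bigl.
rewrite subr0 big1 ?addr0 // => k /andP[h1 h2].
have h3 : (k <= i)%N by rewrite -ltnS e.
by move: h2; rewrite -(inj_eq val_inj) /= eqn_leq h1 h3.
Qed.

Lemma stle_refl n (T : strat n) : stle T T.
Proof. by case: T => * /=. Qed.

Lemma stle_trans n (a b c : strat n) : stle a b -> stle b c -> stle a c.
Proof.
case: a => [k|i|x]; case: b => [k'|i'|x']; case: c => [k''|i''|x''] //=;
  try (by move=> /eqP->); by move=> + /eqP <-.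
Qed.

Section EndJ.
Variables (n : nat) (R : idomainType).

Local Notation sm := (summ n).
Local Notation MX := 'M[R]_(N n).
Local Notation amb := (amb n R).

(* The four kinds of summands: I_{H_b} (degree -1), I_{E_i} (degree 0),
   I_{P_i} in degree 0 (called W_i) and I_{P_i} in degree 1 (called Q_i). *)
Local Notation sH b := (inl (inl (inl b)) : sm).
Local Notation sE i := (inl (inl (inr i)) : sm).
Local Notation sW i := (inl (inr i) : sm).
Local Notation sQ i := (inr i : sm).

Local Notation deg_hom := (mhom (@sm_deg n)).
Local Notation deg_comp := (mcomp (@sm_deg n)).

(* [below t s]: there is a nonzero morphism I_s -> I_t, i.e. the stratum of t
   lies in the closure of that of s. *)
Definition below (t s : sm) : bool := stle (sm_strat t) (sm_strat s).
Arguments below t s /.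

Definition endo (M : MX) : Prop := supported below M.

Lemma below_trans t u s : below t u -> below u s -> below t s.
Proof. exact: stle_trans. Qed.

Definition sgv (t : sm) : R := if odd `|sm_deg t|%N then -1 else 1.

Lemma entPi (T : strat n) (t s : sm) :
  ent (Pi R T) t s = if (t == s) && stle T (sm_strat t) then 1 else 0.
Proof. by rewrite /ent mxE (inj_eq (can_inj (@enum_rankK sm))) /supp enum_rankK. Qed.

Lemma sgnE : sgn n R = mk (fun t s => if t == s then sgv t else 0).
Proof.
apply: mx_eq => t s.
by rewrite entK /ent mxE (inj_eq (can_inj (@enum_rankK sm))) /deg enum_rankK.
Qed.

Lemma entDmx (t s : sm) : ent (Dmx n R) t s = Dcoef R t s.
Proof. by rewrite /ent mxE !enum_rankK. Qed.

Lemma PiE (T : strat n) :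
  Pi R T = mk (fun t s => if t == s then (if stle T (sm_strat t) then 1 else 0) else 0).
Proof. by apply: mx_eq => t s; rewrite entPi entK; case: eqP => [->|]. Qed.

Lemma ent_PiM T (M : MX) t s :
  ent (Pi R T *m M) t s = if stle T (sm_strat t) then ent M t s else 0.
Proof. by rewrite PiE ent_diagM; case: ifP; rewrite ?mul1r ?mul0r. Qed.

Lemma ent_MPi T (M : MX) t s :
  ent (M *m Pi R T) t s = if stle T (sm_strat s) then ent M t s else 0.
Proof. by rewrite PiE ent_Mdiag; case: ifP; rewrite ?mulr1 ?mulr0. Qed.

Lemma ent_sgn_conj (M : MX) t s :
  ent (sgn n R *m M *m sgn n R) t s = sgv t * ent M t s * sgv s.
Proof. by rewrite sgnE ent_Mdiag ent_diagM. Qed.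

Lemma PiPi (T : strat n) : Pi R T *m Pi R T = Pi R T.
Proof.
apply: mx_eq => t s; rewrite ent_PiM entPi.
by case: (stle T _); rewrite ?andbT ?andbF //; case: eqP.
Qed.

Definition mdelta (M : MX) : MX := Dmx n R *m M - sgn n R *m M *m sgn n R *m Dmx n R.

Definition emb (M : MX) : amb := fun T => Pi R T *m M *m Pi R T.

Lemma ent_emb M T t s : ent (emb M T) t s =
  if stle T (sm_strat t) && stle T (sm_strat s) then ent M t s else 0.
Proof. by rewrite /emb ent_MPi ent_PiM; case: (stle T _); case: (stle T _). Qed.

Lemma ambE (F G : amb) : (forall T t s, ent (F T) t s = ent (G T) t s) -> F = G.
Proof. by move=> h; apply: functional_extensionality => T; apply: mx_eq; apply: h. Qed.

Lemma emb_mulT A B T : endo A -> endo B -> emb A T *m emb B T = emb (A *m B) T.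
Proof.
move=> eA eB; apply: mx_eq => t s; rewrite ent_mul ent_emb ent_mul.
case hT: (stle T (sm_strat t)); case hS: (stle T (sm_strat s)) => /=; last 3 first.
- by apply: big1 => u _; rewrite !ent_emb hS /= andbF mulr0.
- by apply: big1 => u _; rewrite !ent_emb hT /= mul0r.
- by apply: big1 => u _; rewrite !ent_emb hT /= mul0r.
apply: eq_bigr => u _; rewrite !ent_emb hT hS /=.
case hu: (stle T (sm_strat u)) => //=.
by rewrite eA ?mul0r //; apply: (contraFN (stle_trans hT) hu).
Qed.

Lemma emb_mul A B : endo A -> endo B -> ambM (emb A) (emb B) = emb (A *m B).
Proof. by move=> eA eB; apply: functional_extensionality => T; apply: emb_mulT. Qed.

Lemma endo_Dmx : endo (Dmx n R).
Proof.
move=> t s; rewrite entDmx /below.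
case: t => [[[a|i]|i]|i]; case: s => [[[b|j]|j]|j] //=.
rewrite negb_or => /andP[h1 h2].
rewrite eq_sym (negbTE h1); case: eqP => // e; move: h2; by rewrite e ordSK eqxx.
Qed.

Lemma endo_sgn_conj A : endo A -> endo (sgn n R *m A *m sgn n R).
Proof. by move=> eA t s h; rewrite ent_sgn_conj eA ?mulr0 ?mul0r. Qed.

Lemma endoM A B : endo A -> endo B -> endo (A *m B).
Proof. by move=> eA eB; apply: supported_mul eA eB below_trans. Qed.

Lemma endo_delta M : endo M -> endo (mdelta M).
Proof.
move=> eM; apply: supportedB; first exact: endoM endo_Dmx eM.
by apply: endoM endo_Dmx; apply: endo_sgn_conj.
Qed.

Lemma emb_sgn_conj M T : sgn n R *m emb M T *m sgn n R = emb (sgn n R *m M *m sgn n R) T.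
Proof.
apply: mx_eq => t s; rewrite ent_sgn_conj !ent_emb ent_sgn_conj.
by case: ifP; rewrite ?mulr0 ?mul0r.
Qed.

Lemma emb_delta M : endo M -> delta (emb M) = emb (mdelta M).
Proof.
move=> eM; apply: functional_extensionality => T.
rewrite /delta /mdelta /emb mulmxBr mulmxBl -!/(emb _ T).
have -> : dJ R T = emb (Dmx n R) T by [].
by rewrite emb_sgn_conj (emb_mulT T endo_Dmx eM) (emb_mulT T (endo_sgn_conj eM) endo_Dmx).
Qed.

Lemma emb_inEnd M : endo M -> inEnd (emb M).
Proof.
move=> eM; split=> [T|T T' [hTT' _]]; first by rewrite /emb !mulmxA PiPi -!mulmxA PiPi.
apply: mx_eq => t s; rewrite !ent_MPi !ent_PiM !ent_MPi !ent_PiM.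
case h1: (stle T' (sm_strat t)); last by rewrite !if_same.
rewrite (stle_trans hTT' h1) /=.
case h2: (stle T (sm_strat s)); case h3: (stle T' (sm_strat s)) => //=.
all: try by rewrite (stle_trans hTT' h3) in h2.
all: by apply: eM; apply: (contraFN (stle_trans h1) h3).
Qed.

(* Conversely every element of End J comes from such a matrix: its entry (t, s)
   is read off at the vertex of t, and naturality gives the other vertices. *)
Lemma inEnd_emb (F : amb) : inEnd F -> exists2 M, endo M & F = emb M.
Proof.
move=> [hPi hnat].
exists (mk (fun t s => if below t s then ent (F (sm_strat t)) t s else 0)).
  by move=> t s h; rewrite entK (negbTE h).
apply: ambE => T t s; rewrite ent_emb entK hPi ent_MPi ent_PiM.
case hT: (stle T (sm_strat t)); case hS: (stle T (sm_strat s)) => //=.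
rewrite /below; have [eT|ne] := classic (T = sm_strat t); first by subst T; rewrite hS.
move/(congr1 (fun X => ent X t s)): (hnat T (sm_strat t) (conj hT ne)).
by rewrite ent_MPi ent_PiM ent_MPi ent_MPi stle_refl hS /= => ->.
Qed.

Lemma emb_inj A B : endo A -> endo B -> emb A = emb B -> A = B.
Proof.
move=> eA eB e; apply: mx_eq => t s.
case h: (below t s); last by rewrite eA ?eB ?h.
have := congr1 (fun F => ent (F (sm_strat t)) t s) e.
by rewrite /= !ent_emb stle_refl -/(below t s) h.
Qed.

Lemma homog_emb p M : endo M -> homog p (emb M) <-> deg_hom p M.
Proof.
move=> eM; split=> [h t s hts | h T i j].
  have := h (sm_strat t) (enum_rank t) (enum_rank s); rewrite /deg !enum_rankK; apply.
  move: hts; rewrite -/(ent (emb M (sm_strat t)) t s) ent_emb stle_refl.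
  by case hh: (stle _ _) => //; rewrite eM ?/below ?hh ?eqxx.
rewrite -(enum_valK i) -(enum_valK j) -/(ent _ _ _) ent_emb /deg !enum_valK.
by case: ifP => _; [apply: h | rewrite eqxx].
Qed.

Lemma comp_emb p M : Defs.comp p (emb M) = emb (deg_comp p M).
Proof.
apply: ambE => T t s; rewrite ent_emb /Defs.comp /ent mxE /deg !enum_rankK.
rewrite -[emb M T _ _]/(ent (emb M T) t s) -[deg_comp p M _ _]/(ent (deg_comp p M) t s).
by rewrite ent_emb entK; case: ifP; case: ifP.
Qed.

Lemma amb0_emb : @amb0 n R = emb 0.
Proof. by apply: ambE => T t s; rewrite ent_emb ent0 if_same. Qed.
Lemma amb1_emb : amb1 R = emb 1%:M.
Proof. by apply: functional_extensionality => T; rewrite /emb mulmx1 PiPi. Qed.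
Lemma ambD_emb A B : ambD (emb A) (emb B) = emb (A + B).
Proof. by apply: functional_extensionality => T; rewrite /ambD /emb mulmxDr mulmxDl. Qed.
Lemma ambB_emb A B : ambB (emb A) (emb B) = emb (A - B).
Proof. by apply: functional_extensionality => T; rewrite /ambB /emb mulmxBr mulmxBl. Qed.
Lemma ambZ_emb a A : ambZ a (emb A) = emb (a *: A).
Proof. by apply: functional_extensionality => T; rewrite /ambZ /emb scalemxAl scalemxAr. Qed.

Definition embP (C : MX -> Prop) (x : amb) : Prop := exists2 M, C M & x = emb M.

Definition realizes (X : amb -> Prop) (C : MX -> Prop) : Prop :=
  (forall M, C M -> endo M) /\ (forall x, X x <-> embP C x).

Lemma realizes_embP C : (forall M, C M -> endo M) -> realizes (embP C) C.
Proof. by []. Qed.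

Lemma realizes_inEnd : realizes (@inEnd n R) endo.
Proof.
split=> // x; split; first exact: inEnd_emb.
by case=> M eM ->; apply: emb_inEnd.
Qed.

Lemma realizes_zero : realizes (@zeroP n R) (fun M => M = 0).
Proof.
split=> [M ->|x]; first exact: supported0.
rewrite /zeroP amb0_emb; split=> [->|[M -> ->]] //; by exists 0.
Qed.

Lemma realizes_emb X C M : realizes X C -> endo M -> X (emb M) <-> C M.
Proof.
case=> hC hX eM; rewrite hX; split=> [[N cN /esym eNM]|cM]; last by exists M.
by rewrite -(emb_inj (hC N cN) eM eNM).
Qed.

Lemma psubset_embP (C1 C2 : MX -> Prop) :
  (forall M, C1 M -> C2 M) -> psubset (embP C1) (embP C2).
Proof. by move=> h x [M /h cM ->]; exists M. Qed.

Lemma embP_submod (C : MX -> Prop) : (forall M, C M -> endo M) -> C 0 ->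
  (forall A B, C A -> C B -> C (A + B)) -> (forall a A, C A -> C (a *: A)) ->
  (forall p A, C A -> C (deg_comp p A)) -> (forall A, C A -> C (mdelta A)) ->
  dg_submod (embP C).
Proof.
move=> hC h0 hD hZ hcomp hdelta; split.
- by exists 0; rewrite ?amb0_emb.
- by move=> x y [A cA ->] [B cB ->]; exists (A + B); [apply: hD | rewrite ambD_emb].
- by move=> a x [A cA ->]; exists (a *: A); [apply: hZ | rewrite ambZ_emb].
- by move=> p x [A cA ->]; exists (deg_comp p A); [apply: hcomp | rewrite comp_emb].
- by move=> x [A cA ->]; exists (mdelta A); [apply: hdelta | rewrite (emb_delta (hC _ cA))].
Qed.

Lemma embP_mul (C1 C2 C : MX -> Prop) :
  (forall M, C1 M -> endo M) -> (forall M, C2 M -> endo M) ->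
  (forall A B, C1 A -> C2 B -> C (A *m B)) ->
  forall x y, embP C1 x -> embP C2 y -> embP C (ambM x y).
Proof.
move=> h1 h2 hM x y [A cA ->] [B cB ->].
by exists (A *m B); [apply: hM | rewrite (emb_mul (h1 _ cA) (h2 _ cB))].
Qed.

Lemma embP_one (C : MX -> Prop) : C 1%:M -> embP C (amb1 R).
Proof. by exists 1%:M; rewrite ?amb1_emb. Qed.

Lemma embP_delta (C D : MX -> Prop) : (forall M, C M -> endo M) ->
  (forall M, C M -> D (mdelta M)) -> forall x, embP C x -> embP D (delta x).
Proof.
by move=> hC hD x [M cM ->]; exists (mdelta M); [apply: hD | rewrite (emb_delta (hC _ cM))].
Qed.

Definition mcocycle (C D : MX -> Prop) (p : int) (M : MX) : Prop :=
  [/\ C M, deg_hom p M & D (mdelta M)].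
Definition mcobdry (C D : MX -> Prop) (p : int) (M : MX) : Prop :=
  [/\ C M, deg_hom p M & exists2 Y, C Y /\ deg_hom (p - 1) Y & D (M - mdelta Y)].

Definition mqiso (C1 D1 C2 D2 : MX -> Prop) : Prop :=
  [/\ forall M, C1 M -> C2 M, forall M, D1 M -> D2 M &
  forall p : int,
    (forall Z, mcocycle C2 D2 p Z -> exists2 X, mcocycle C1 D1 p X & mcobdry C2 D2 p (Z - X)) /\
    (forall X, mcocycle C1 D1 p X -> mcobdry C2 D2 p X -> mcobdry C1 D1 p X)].

Section Transfer.
Variables (X Y : amb -> Prop) (C D : MX -> Prop).
Hypotheses (hXC : realizes X C) (hYD : realizes Y D).

Lemma cocycle_emb p M : endo M -> cocycle X Y p (emb M) <-> mcocycle C D p M.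
Proof.
move=> eM; have hX := realizes_emb hXC eM; have hH := homog_emb p eM.
have hD := realizes_emb hYD (endo_delta eM).
by rewrite /cocycle /mcocycle emb_delta //; split=> -[/hX ? /hH ? /hD ?].
Qed.

Lemma cobdry_emb p M : endo M -> cobdry X Y p (emb M) <-> mcobdry C D p M.
Proof.
move=> eM; have hX := realizes_emb hXC eM; have hH := homog_emb p eM.
split=> -[/hX cM /hH hM hY]; split=> //.
  case: hY => y [/(proj2 hXC) [N cN ->] hN]; have eN := proj1 hXC N cN.
  rewrite emb_delta // ambB_emb => /(realizes_emb hYD (supportedB eM (endo_delta eN))) hMN.
  by exists N => //; split=> //; apply/(homog_emb _ eN).
case: hY => N [cN hN] hMN; have eN := proj1 hXC N cN.
exists (emb N); split; first exact/(realizes_emb hXC eN).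
  exact/(homog_emb _ eN).
by rewrite emb_delta // ambB_emb; apply/(realizes_emb hYD (supportedB eM (endo_delta eN))).
Qed.

End Transfer.

Lemma qiso_emb X1 Y1 X2 Y2 C1 D1 C2 D2 :
  realizes X1 C1 -> realizes Y1 D1 -> realizes X2 C2 -> realizes Y2 D2 ->
  mqiso C1 D1 C2 D2 -> qiso X1 Y1 X2 Y2.
Proof.
move=> r1 s1 r2 s2 [sub12 subD hH]; split.
- by move=> x /(proj2 r1) [M cM ->]; apply/(proj2 r2); exists M => //; apply: sub12.
- by move=> x /(proj2 s1) [M cM ->]; apply/(proj2 s2); exists M => //; apply: subD.
move=> p; have [surj inj] := hH p; split.
  move=> z hz; case: (hz) => /(proj2 r2) [Z cZ ez] _ _; subst z.
  have eZ := proj1 r2 Z cZ.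
  have [M cocM cobZM] := surj Z (proj1 (cocycle_emb r2 s2 _ eZ) hz).
  have [cM _ _] := cocM; have eM := proj1 r1 M cM.
  exists (emb M); split; first exact/(cocycle_emb r1 s1 _ eM).
  by rewrite ambB_emb; apply/(cobdry_emb r2 s2 _ (supportedB eZ eM)).
move=> x hx; case: (hx) => /(proj2 r1) [M cM ex] _ _; subst x.
have eM := proj1 r1 M cM.
move=> /(cobdry_emb r2 s2 _ eM) cob; apply/(cobdry_emb r1 s1 _ eM).
by apply: inj => //; apply/(cocycle_emb r1 s1 _ eM).
Qed.

(* From now on n >= 2, so that the two endpoints P_(i-1), P_i of E_i differ. *)
Hypothesis hn : (2 <= n)%N.
Local Notation ordS_neq := (ordS_neq hn).

(* The differential squares to zero, since D^2 = 0 and sgn anticommutes with D. *)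
Lemma Dmx2 : Dmx n R *m Dmx n R = 0.
Proof.
apply: mx_eq => t s; rewrite ent_mul ent0.
case: t => [[[a|i]|i]|i]; case: s => [[[b|j]|j]|j];
  try by apply: big1 => u _; rewrite !entDmx; case: u => [[[c|k]|k]|k]; rewrite /= ?mul0r ?mulr0.
rewrite (sum_pair (u0 := sE i) (u1 := sE (ordS i))).
- rewrite !entDmx /= eqxx (negbTE (ordS_neq i)) eqxx.
  by case: b; rewrite ?mulN1r ?mul1r ?mulNr subrr // addrC subrr.
- by rewrite !eqsm eq_sym ordS_neq.
- move=> u; rewrite !entDmx; case: u => [[[c|k]|k]|k]; rewrite /= ?mul0r ?mulr0 //.
  by rewrite !eqsm => /negbTE-> /negbTE->; rewrite mul0r.
Qed.

Local Notation D := (Dmx n R).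
Local Notation S := (sgn n R).

Lemma sgn2 : S *m S = 1%:M.
Proof.
apply: mx_eq => t s; rewrite {1}sgnE ent_diagM sgnE entK ent1.
by case: eqP => [->|_]; rewrite ?mulr0 // /sgv; case: odd; rewrite ?mulN1r ?opprK ?mul1r.
Qed.

(* The differential of J has degree one, so conjugation by the sign flips it. *)
Lemma sgn_Dmx : S *m D *m S = - D.
Proof.
apply: mx_eq => t s; rewrite ent_sgn_conj entN entDmx.
case: t => [[[a|i]|i]|i]; case: s => [[[b|j]|j]|j];
  rewrite /sgv /= ?mul0r ?mulr0 ?oppr0 ?mul1r ?mulr1 ?mulN1r ?mulrN1 // ?opprK.
all: by rewrite oppr0.
Qed.

Lemma mdelta2 M : mdelta (mdelta M) = 0.
Proof.
have SDS_D (A : MX) : A *m (S *m D *m S) *m D = 0.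
  by rewrite sgn_Dmx mulmxN mulNmx -mulmxA Dmx2 mulmx0 oppr0.
have SD_DS : S *m D *m M *m S *m D = - (D *m S *m M *m S *m D).
  have -> : S *m D = (S *m D *m S) *m S by rewrite -mulmxA sgn2 mulmx1.
  by rewrite sgn_Dmx !mulNmx.
rewrite /mdelta !mulmxBr !mulmxBl !mulmxA Dmx2 mul0mx sub0r.
have -> : S *m S *m M *m S *m D *m S *m D = (S *m S *m M) *m (S *m D *m S) *m D.
  by rewrite !mulmxA.
rewrite SDS_D SD_DS subr0; exact: subrr.
Qed.

Lemma mdeltaB A B : mdelta (A - B) = mdelta A - mdelta B.
Proof. by rewrite /mdelta !mulmxBr !mulmxBl; exact: subrACA. Qed.

Lemma mdelta0 : mdelta 0 = 0.
Proof. by rewrite /mdelta mulmx0 mulmx0 !mul0mx subr0. Qed.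

Lemma deg_hom_Dmx : deg_hom 1 D.
Proof.
move=> t s; rewrite entDmx.
by case: t => [[[a|i]|i]|i]; case: s => [[[b|j]|j]|j]; rewrite /= ?eqxx.
Qed.

Lemma mdelta_comp q M : mdelta (deg_comp q M) = deg_comp (q + 1) (mdelta M).
Proof.
have compS : deg_comp q (S *m M *m S) = S *m deg_comp q M *m S.
  by apply: mx_eq => t s; rewrite entK !ent_sgn_conj entK; case: ifP; rewrite ?mulr0 ?mul0r.
rewrite /mdelta compB (comp_mull _ _ deg_hom_Dmx) compS.
by rewrite [q + 1]addrC (comp_mulr _ _ deg_hom_Dmx).
Qed.

(* Since all our classes are stable under taking homogeneous components and the
   differential is homogeneous, a quasi-isomorphism may be checked ignoring
   degrees: cocycles are homotopic to cocycles of the smaller complex, and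
   cocycles of the smaller complex that bound in the bigger one already bound in
   the smaller one.  Homogeneous witnesses are then obtained by taking
   components. *)
Definition comp_closed (C : MX -> Prop) : Prop := forall q M, C M -> C (deg_comp q M).

Lemma comp_closed0 : comp_closed (fun M => M = 0).
Proof. by move=> q M ->; rewrite comp0. Qed.

Lemma mcobdry_comp (C D : MX -> Prop) p X Y W : comp_closed C -> comp_closed D ->
  C X -> deg_hom p X -> C Y -> D (W - mdelta Y) -> deg_comp p W = X -> mcobdry C D p X.
Proof.
move=> cC cD cX hX cY dWY eW; split=> //.
exists (deg_comp (p - 1) Y); first by split; [apply: cC | apply: mhom_compq].
by rewrite mdelta_comp subrK -eW -compB; apply: cD.
Qed.

Lemma mqiso_of (C1 D1 C2 D2 : MX -> Prop) :
  comp_closed C1 -> comp_closed D1 -> comp_closed C2 -> comp_closed D2 ->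
  (forall A B, C2 A -> C2 B -> C2 (A - B)) ->
  (forall M, C1 M -> C2 M) -> (forall M, D1 M -> D2 M) ->
  (forall Z, C2 Z -> D2 (mdelta Z) ->
     exists X Y, [/\ C1 X, D1 (mdelta X), C2 Y & D2 (Z - X - mdelta Y)]) ->
  (forall X Y, C1 X -> D1 (mdelta X) -> C2 Y -> D2 (X - mdelta Y) ->
     exists2 Y', C1 Y' & D1 (X - mdelta Y')) ->
  mqiso C1 D1 C2 D2.
Proof.
move=> cC1 cD1 cC2 cD2 subC2 sC sD surj inj; split=> // p; split.
  move=> Z [cZ hZ dZ]; have [X [Y [cX dX cY dZXY]]] := surj Z cZ dZ.
  exists (deg_comp p X).
    by split; [apply: cC1 | apply: mhom_compq | rewrite mdelta_comp; apply: cD1].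
  apply: (mcobdry_comp cC2 cD2 _ _ cY dZXY); last by rewrite compB comp_id.
    by rewrite -(comp_id hZ) -compB; apply/cC2/subC2/sC.
  by apply: mhomB => //; apply: mhom_compq.
move=> X [cX hX dX] [_ _ [Y [cY _] dXY]].
have [Y' cY' dXY'] := inj X Y cX dX cY dXY.
exact: (mcobdry_comp cC1 cD1 cX hX cY' dXY' (comp_id hX)).
Qed.

(* Each entry of
   [D M] and [sgn M sgn D] is a sum over a middle index with at most two nonzero
   terms, because D has at most two nonzero entries per row and column;
   [kill_terms] disposes of the vanishing terms by case analysis on the index. *)
Lemma sgv_E i : sgv (sE i) = 1. Proof. by []. Qed.
Lemma sgv_W i : sgv (sW i) = 1. Proof. by []. Qed.
Lemma sgv_Q i : sgv (sQ i) = -1. Proof. by []. Qed.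

Ltac rewrite_neqs := repeat match goal with H : is_true (?x != ?y) |- _ =>
   first [ rewrite (negbTE H) | rewrite [y == x]eq_sym (negbTE H) ] end.

Ltac kill_terms eM :=
  let u := fresh "u" in move=> u; case: u => [[[?|?]|?]|?]; rewrite ?eqsm => *;
  rewrite ?ent_sgn_conj ?entDmx /= ?mul0r ?mulr0 //; rewrite_neqs; rewrite ?mul0r ?mulr0 //;
  try (rewrite eM ?mulr0 ?mul0r //= 1?eq_sym //; fail);
  try (rewrite eM ?mulr0 ?mul0r //= ?pred_ordS; rewrite_neqs; done).

Lemma delta_EH M i b : endo M -> ent (mdelta M) (sE i) (sH b) =
  (if b then -1 else 1) * (ent M (sH b) (sH b) - ent M (sE i) (sE i)).
Proof.
move=> eM; rewrite /mdelta entB !ent_mul.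
rewrite (sum_single (u0 := sH b)); last by kill_terms eM.
rewrite (sum_single (u0 := sE i)); last by kill_terms eM.
by rewrite ent_sgn_conj !entDmx sgv_E mul1r mulr1 mulrBr [ent M (sE i) _ * _]mulrC.
Qed.

Lemma delta_QH M i b : endo M -> ent (mdelta M) (sQ i) (sH b) =
  ent M (sE i) (sH b) - ent M (sE (ordS i)) (sH b)
  + (if b then -1 else 1) * (ent M (sQ i) (sE i) + ent M (sQ i) (sE (ordS i))).
Proof.
move=> eM; have hne : sE i != sE (ordS i) by rewrite !eqsm eq_sym ordS_neq.
rewrite /mdelta entB !ent_mul.
rewrite (sum_pair (u0 := sE i) (u1 := sE (ordS i))) //; last by kill_terms eM.
rewrite (sum_pair (u0 := sE i) (u1 := sE (ordS i))) //; last by kill_terms eM.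
rewrite !ent_sgn_conj !entDmx /= eqxx (negbTE (ordS_neq i)) eqxx sgv_Q sgv_E.
rewrite !mul1r !mulN1r !mulr1 !mulNr -opprD opprK mulrDr.
by rewrite [_ * ent M (sQ i) (sE i)]mulrC [_ * ent M (sQ i) (sE (ordS i))]mulrC.
Qed.

Lemma delta_QE M i j : endo M -> ent (mdelta M) (sQ i) (sE j) =
  Dcoef R (sQ i) (sE j) * (ent M (sE j) (sE j) - ent M (sQ i) (sQ i)).
Proof.
move=> eM; rewrite /mdelta entB !ent_mul.
rewrite (sum_single (u0 := sE j)); last by kill_terms eM.
rewrite (sum_single (u0 := sQ i)); last by kill_terms eM.
rewrite ent_sgn_conj !entDmx sgv_Q mulN1r mulrN1 opprK mulrBr.
by rewrite [ent M (sQ i) _ * _]mulrC.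
Qed.

Lemma delta_WH M i b : endo M -> ent (mdelta M) (sW i) (sH b) =
  - ((if b then -1 else 1) * (ent M (sW i) (sE i) + ent M (sW i) (sE (ordS i)))).
Proof.
move=> eM; have hne : sE i != sE (ordS i) by rewrite !eqsm eq_sym ordS_neq.
rewrite /mdelta entB !ent_mul.
rewrite big1; last by kill_terms eM.
rewrite (sum_pair (u0 := sE i) (u1 := sE (ordS i))) //; last by kill_terms eM.
rewrite !ent_sgn_conj !entDmx /= sgv_W !sgv_E !mul1r !mulr1 sub0r mulrDr.
by rewrite [_ * ent M (sW i) (sE i)]mulrC [_ * ent M (sW i) (sE (ordS i))]mulrC.
Qed.

Lemma delta_WE M i j : endo M -> ent (mdelta M) (sW i) (sE j) =
  ent M (sW i) (sQ i) * Dcoef R (sQ i) (sE j).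
Proof.
move=> eM; rewrite /mdelta entB !ent_mul.
rewrite big1; last by kill_terms eM.
rewrite (sum_single (u0 := sQ i)); last by kill_terms eM.
by rewrite ent_sgn_conj !entDmx sgv_W sgv_Q mul1r mulrN1 mulNr opprK add0r.
Qed.

Definition delta_shape (t s : sm) : bool :=
  match t, s with
  | inl (inl (inr _)), inl (inl (inl _)) => true
  | inr _, inl (inl (inl _)) => true
  | inr _, inl (inl (inr _)) => true
  | inl (inr _), inl (inl (inl _)) => true
  | inl (inr _), inl (inl (inr _)) => true
  | _, _ => false
  end.

Lemma delta_other M t s : endo M -> ~~ delta_shape t s -> ent (mdelta M) t s = 0.
Proof.
move=> eM; rewrite /mdelta entB !ent_mul.
case: t => [[[a|i]|i]|i]; case: s => [[[b|j]|j]|j] //= _;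
 rewrite !big1 ?subr0 //; kill_terms eM.
Qed.


(* U consists of the
   endomorphism matrices which are diagonal except for the blocks Q_i <- W_i and
   X <- H_1 (X = E_i, W_i, Q_i), and whose diagonal entries at the E_i and Q_i
   all equal the one at H_2.  The ideal I consists of the matrices supported on
   E_i <- H_1 (i <> i0) and Q_i <- H_1, the latter entries summing to zero.  S is
   the subalgebra of U with vanishing E_i0 <- H_1 entry and equal diagonal
   entries at H_1 and H_2; S/I is the cohomology of U/I. *)
Definition i0 : 'I_n := Ordinal (leq_trans (isT : (0 < 2)%N) hn).

Definition patU (t s : sm) : bool :=
  match t, s with
  | inl (inl (inl a)), inl (inl (inl b)) => a == b
  | inl (inl (inr i)), inl (inl (inr j)) => i == j
  | inl (inr i), inl (inr j) => i == j
  | inr i, inr j => i == j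
  | inr i, inl (inr j) => i == j
  | inl (inr _), inl (inl (inl b)) => ~~ b
  | inr _, inl (inl (inl b)) => ~~ b
  | inl (inl (inr _)), inl (inl (inl b)) => ~~ b
  | _, _ => false
  end.

Definition patI (t s : sm) : bool :=
  match t, s with
  | inl (inl (inr i)), inl (inl (inl b)) => ~~ b && (i != i0)
  | inr _, inl (inl (inl b)) => ~~ b
  | _, _ => false
  end.

Definition patS (t s : sm) : bool :=
  match t, s with
  | inl (inl (inr i)), inl (inl (inl b)) => ~~ b && (i != i0)
  | _, _ => patU t s
  end.

Definition inU (M : MX) : Prop :=
  [/\ supported patU M,
      forall i, ent M (sE i) (sE i) = ent M (sH true) (sH true)
    & forall i, ent M (sQ i) (sQ i) = ent M (sH true) (sH true)].

Definition balanced (M : MX) : Prop := ent M (sH false) (sH false) = ent M (sH true) (sH true).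

Definition inS (M : MX) : Prop :=
  [/\ supported patS M,
      forall i, ent M (sE i) (sE i) = ent M (sH true) (sH true),
      forall i, ent M (sQ i) (sQ i) = ent M (sH true) (sH true)
    & balanced M].

Definition inI (M : MX) : Prop :=
  supported patI M /\ \sum_(i < n) ent M (sQ i) (sH false) = 0.

Ltac pattern_cases := intros; repeat match goal with
  | H : is_true (_ && _) |- _ => case/andP: H => ??
  | H : is_true (?x == ?y) |- _ => move/eqP: H => ?; subst
  | H : is_true (~~ ?b) |- _ => is_var b; move/negbTE: H => ?; subst
  end; rewrite /= ?eqxx ?andbT //.

Lemma patU_below : subrel patU below.
Proof. by move=> t s; case: t => [[[a|i]|i]|i]; case: s => [[[b|j]|j]|j] //=; pattern_cases. Qed.

Lemma patS_patU : subrel patS patU.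
Proof. by move=> t s; case: t => [[[a|i]|i]|i]; case: s => [[[b|j]|j]|j] //=; pattern_cases. Qed.

Lemma patU_refl : reflexive patU.
Proof. by case=> [[[a|i]|i]|i] /=. Qed.

Lemma patS_refl : reflexive patS.
Proof. by case=> [[[a|i]|i]|i] /=. Qed.

Lemma patU_trans t u s : patU t u -> patU u s -> patU t s.
Proof.
by case: t => [[[a|i]|i]|i]; case: u => [[[c|k]|k]|k]; case: s => [[[b|j]|j]|j] //=;
  pattern_cases.
Qed.

Lemma patS_trans t u s : patS t u -> patS u s -> patS t s.
Proof.
by case: t => [[[a|i]|i]|i]; case: u => [[[c|k]|k]|k]; case: s => [[[b|j]|j]|j] //=;
  pattern_cases.
Qed.

Lemma patUI t u s : patU t u -> patI u s -> patI t s.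
Proof.
by case: t => [[[a|i]|i]|i]; case: u => [[[c|k]|k]|k]; case: s => [[[b|j]|j]|j] //=;
  pattern_cases.
Qed.

Lemma patIU t u s : patI t u -> patU u s -> patI t s.
Proof.
by case: t => [[[a|i]|i]|i]; case: u => [[[c|k]|k]|k]; case: s => [[[b|j]|j]|j] //=;
  pattern_cases.
Qed.

Lemma inU_endo M : inU M -> endo M.
Proof. by case=> hM _ _; apply: supported_sub patU_below hM. Qed.

Lemma inS_inU M : inS M -> inU M.
Proof. by case=> hM h1 h2 _; split => //; apply: supported_sub patS_patU hM. Qed.

Lemma inI_inS M : inI M -> inS M.
Proof.
case=> hM _; split; try by move=> *; rewrite !hM.
move=> t s hs; apply: hM; move: hs.
by case: t => [[[a|i]|i]|i]; case: s => [[[b|j]|j]|j].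
Qed.

Lemma inI_inU M : inI M -> inU M.
Proof. by move/inI_inS/inS_inU. Qed.

Lemma inS_endo M : inS M -> endo M.
Proof. by move/inS_inU/inU_endo. Qed.

Lemma inI_endo M : inI M -> endo M.
Proof. by move/inI_inU/inU_endo. Qed.

Ltac single_middle := let u := fresh "u" in move=> u; case: u => [[[?|?]|?]|?];
  rewrite ?eqsm => *; rewrite /= ?andbF //; rewrite_neqs; rewrite ?andbF ?andbT //.

Lemma inU0 : inU 0.
Proof. by split=> *; rewrite ?ent0 //; apply: supported0. Qed.

Lemma inU1 : inU 1%:M.
Proof. by split=> [|i|i]; rewrite ?ent1 ?eqxx //; apply: supported1 patU_refl. Qed.

Lemma inUD A B : inU A -> inU B -> inU (A + B).
Proof.
case=> hA a1 a2 [hB b1 b2].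
by split=> [|i|i]; rewrite ?entD ?a1 ?b1 ?a2 ?b2 //; apply: supportedD.
Qed.

Lemma inUB A B : inU A -> inU B -> inU (A - B).
Proof.
case=> hA a1 a2 [hB b1 b2].
by split=> [|i|i]; rewrite ?entB ?a1 ?b1 ?a2 ?b2 //; apply: supportedB.
Qed.

Lemma inUZ a A : inU A -> inU (a *: A).
Proof. by case=> hA a1 a2; split=> [|i|i]; rewrite ?entZ ?a1 ?a2 //; apply: supportedZ. Qed.

Lemma inU_comp p A : inU A -> inU (deg_comp p A).
Proof.
case=> hA a1 a2; split=> [|i|i]; rewrite ?ent_comp_diag ?a1 ?a2 //.
exact: supported_comp.
Qed.

Lemma inUM A B : inU A -> inU B -> inU (A *m B).
Proof.
case=> hA a1 a2 [hB b1 b2]; split=> [|i|i]; first exact: supported_mul hA hB patU_trans.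
- rewrite (ent_mul_single (u0 := sE i) hA hB); last by single_middle.
  rewrite (ent_mul_single (u0 := sH true) hA hB); last by single_middle.
  by rewrite a1 b1.
- rewrite (ent_mul_single (u0 := sQ i) hA hB); last by single_middle.
  rewrite (ent_mul_single (u0 := sH true) hA hB); last by single_middle.
  by rewrite a2 b2.
Qed.

Lemma inS0 : inS 0.
Proof. by split=> [|i|i|]; rewrite /balanced ?ent0 //; apply: supported0. Qed.

Lemma inS1 : inS 1%:M.
Proof. by split=> [|i|i|]; rewrite /balanced ?ent1 ?eqxx //; apply: supported1 patS_refl. Qed.

Lemma inSD A B : inS A -> inS B -> inS (A + B).
Proof.
case=> hA a1 a2 a3 [hB b1 b2 b3].
by split=> [|i|i|]; rewrite /balanced ?entD ?a1 ?b1 ?a2 ?b2 ?a3 ?b3 //; apply: supportedD.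
Qed.

Lemma inSZ a A : inS A -> inS (a *: A).
Proof.
by case=> hA a1 a2 a3; split=> [|i|i|]; rewrite /balanced ?entZ ?a1 ?a2 ?a3 //; apply: supportedZ.
Qed.

Lemma inS_comp p A : inS A -> inS (deg_comp p A).
Proof.
case=> hA a1 a2 a3; split=> [|i|i|]; rewrite /balanced ?ent_comp_diag ?a1 ?a2 ?a3 //.
exact: supported_comp.
Qed.

Lemma inSM A B : inS A -> inS B -> inS (A *m B).
Proof.
move=> sA sB; have [uAB ? ?] := inUM (inS_inU sA) (inS_inU sB).
case: sA sB => hA _ _ a1 [hB _ _ a2]; split=> //; first exact: supported_mul hA hB patS_trans.
rewrite /balanced (ent_mul_single (u0 := sH false) hA hB); last by single_middle.
rewrite (ent_mul_single (u0 := sH true) hA hB); last by single_middle.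
by rewrite a1 a2.
Qed.

Lemma inI0 : inI 0.
Proof. by split; [apply: supported0 | rewrite big1 // => i _; rewrite ent0]. Qed.

Lemma inID A B : inI A -> inI B -> inI (A + B).
Proof.
case=> hA a1 [hB b1]; split; first exact: supportedD.
by rewrite (eq_bigr _ (fun i _ => entD A B _ _)) big_split /= a1 b1 addr0.
Qed.

Lemma inIZ a A : inI A -> inI (a *: A).
Proof.
case=> hA a1; split; first exact: supportedZ.
by rewrite (eq_bigr _ (fun i _ => entZ a A _ _)) -mulr_sumr a1 mulr0.
Qed.

Lemma inI_comp p A : inI A -> inI (deg_comp p A).
Proof.
case=> hA a1; split; first exact: supported_comp.
rewrite (eq_bigr (fun i => if 1 == -1 + p then ent A (sQ i) (sH false) else 0));
  last by move=> i _; rewrite entK.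
by case: (1 == -1 + p :> int); rewrite ?a1 // big1.
Qed.

Lemma inI_mulUl A B : inU A -> inI B -> inI (A *m B).
Proof.
case=> hA a1 a2 [hB b1]; split; first exact: supported_mul hA hB patUI.
rewrite (eq_bigr (fun i => ent A (sH true) (sH true) * ent B (sQ i) (sH false))).
  by rewrite -mulr_sumr b1 mulr0.
by move=> i _; rewrite (ent_mul_single (u0 := sQ i) hA hB) ?a2 //; single_middle.
Qed.

Lemma inI_mulUr A B : inI A -> inU B -> inI (A *m B).
Proof.
case=> hA a1 [hB b1 b2]; split; first exact: supported_mul hA hB patIU.
rewrite (eq_bigr (fun i => ent A (sQ i) (sH false) * ent B (sH false) (sH false))).
  by rewrite -mulr_suml a1 mul0r.
by move=> i _; rewrite (ent_mul_single (u0 := sH false) hA hB) //; single_middle.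
Qed.

Definition deltaU_entries (M : MX) (t s : sm) : R :=
  match t, s with
  | inl (inl (inr _)), inl (inl (inl false)) =>
      ent M (sH false) (sH false) - ent M (sH true) (sH true)
  | inr i, inl (inl (inl false)) => ent M (sE i) (sH false) - ent M (sE (ordS i)) (sH false)
  | _, _ => 0
  end.

Lemma mdeltaU M : inU M -> mdelta M = mk (deltaU_entries M).
Proof.
move=> uM; have eM := inU_endo uM; case: uM => hM a1 a2.
apply: mx_eq => t s; rewrite entK.
case: t => [[[a|i]|i]|i]; case: s => [[[b|j]|j]|j]; try (by rewrite delta_other).
- by rewrite delta_EH // a1; case: b; rewrite /= ?subrr ?mulr0 ?mul1r.
- by rewrite delta_WH // !(hM (sW i)) // addr0 mulr0 oppr0; case: b.
- by rewrite delta_WE // hM // mul0r.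
- rewrite delta_QH // !(hM (sQ i) (sE _)) // addr0 mulr0 addr0.
  by case: b => //=; rewrite !hM // subr0.
- by rewrite delta_QE // a1 a2 subrr mulr0.
Qed.

Lemma inU_delta M : inU M -> inU (mdelta M).
Proof.
move=> uM; rewrite mdeltaU //; split.
- move=> t s; rewrite entK; case: t => [[[a|i]|i]|i]; case: s => [[[b|j]|j]|j] //=; by case: b.
- by move=> i; rewrite !entK.
- by move=> i; rewrite !entK.
Qed.

Lemma inI_delta_balanced M : inU M -> balanced M -> inI (mdelta M).
Proof.
move=> uM e; rewrite mdeltaU //; split.
- move=> t s; rewrite entK; case: t => [[[a|i]|i]|i]; case: s => [[[b|j]|j]|j] //=;
  case: b => //=; by rewrite e subrr.
- rewrite (eq_bigr (fun i => ent M (sE i) (sH false) - ent M (sE (ordS i)) (sH false))).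
    by rewrite sumrB (sum_ordS (fun i => ent M (sE i) (sH false))) subrr.
  by move=> i _; rewrite entK.
Qed.

Lemma inI_delta_inS M : inS M -> inI (mdelta M).
Proof. by move=> sM; case: (sM) => _ _ _; apply: inI_delta_balanced (inS_inU sM). Qed.

Lemma inS_delta M : inS M -> inS (mdelta M).
Proof. by move/inI_delta_inS/inI_inS. Qed.

Lemma inI_delta M : inI M -> inI (mdelta M).
Proof. by move/inI_inS/inI_delta_inS. Qed.

(* A cocycle M of End J becomes an element of
   U after subtracting the coboundary of the homotopy [htpy_End M]; and a
   coboundary of End J lying in U is the coboundary of an element of U, obtained
   by folding the H_2-column of the primitive onto the H_1-column. *)
Definition htpy_End (M : MX) (t s : sm) : R :=
  match t, s with
  | inl (inr i), inr j => if j == i then ent M (sW i) (sE i) else 0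
  | inl (inl (inr i)), inl (inl (inr j)) => if j == i then ent M (sE i) (sH true) else 0
  | inr i, inr j => if j == i then ent M (sE i) (sH true) - ent M (sQ i) (sE i) else 0
  | inl (inr i), inl (inl (inr j)) => if j == i then ent M (sW i) (sH true) else 0
  | inr i, inl (inl (inr j)) => if j == i then - ent M (sQ i) (sH true) else 0
  | _, _ => 0
  end.

Lemma htpy_End_endo M : endo (mk (htpy_End M)).
Proof.
move=> t s; rewrite entK.
case: t => [[[a|i]|i]|i]; case: s => [[[b|j]|j]|j] //=;
  try (by rewrite eq_sym => /negbTE->); by rewrite negb_or eq_sym => /andP[/negbTE-> _].
Qed.

Lemma cocycle_End_diag M : endo M -> mdelta M = 0 ->
  (forall i, ent M (sE i) (sE i) = ent M (sH true) (sH true)) /\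
  (forall i, ent M (sQ i) (sQ i) = ent M (sH true) (sH true)).
Proof.
move=> eM cM; have c t s : ent (mdelta M) t s = 0 by rewrite cM ent0.
have EE i : ent M (sE i) (sE i) = ent M (sH true) (sH true).
  have := c (sE i) (sH true); rewrite delta_EH // mulN1r => /eqP.
  by rewrite oppr_eq0 subr_eq0 => /eqP ->.
split=> // i; rewrite -(EE i); apply/esym/eqP; rewrite -subr_eq0.
by have := c (sQ i) (sE i); rewrite delta_QE // /= eqxx mul1r => ->.
Qed.

Lemma htpy_End_support M : endo M -> mdelta M = 0 ->
  supported patU (M - mdelta (mk (htpy_End M))).
Proof.
move=> eM cM; have eY := htpy_End_endo M; have hne := ordS_neq.
have c t s : ent (mdelta M) t s = 0 by rewrite cM ent0.
move=> t s hU; rewrite entB.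
case hst: (below t s); last by rewrite eM ?(endo_delta eY) ?hst ?subr0.
move: hU hst; case: t => [[[a|i]|i]|i]; case: s => [[[b|j]|j]|j] //=.
all: try (by move=> /negbTE ->).
- case: b => //= _ _.
  by rewrite delta_EH // !entK /= eqxx sub0r mulN1r opprK subrr.
- case: b => //= _ _.
  by rewrite delta_WH // !entK /= eqxx (negbTE (hne i)) addr0 mulN1r !opprK subrr.
- move=> _ hst; rewrite delta_WE // entK /= eqxx.
  have [->|ne] := eqVneq j i; first by rewrite mulr1 subrr.
  have -> : j = ordS i by move: hst; rewrite pred_ordS eq_sym (negbTE ne) => /eqP.
  rewrite eqxx mulrN1 opprK.
  by have := c (sW i) (sH false); rewrite delta_WH // mul1r => /eqP; rewrite oppr_eq0 addrC => /eqP.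
- move=> _ /eqP ->; rewrite delta_other // subr0.
  by have := c (sW j) (sE j); rewrite delta_WE // /= eqxx mulr1.
- case: b => //= _ _.
  rewrite delta_QH // !entK /= eqxx (negbTE (hne i)) addr0 subrr add0r.
  by rewrite mulN1r opprK subrr.
- move=> _ hst; rewrite delta_QE // !entK /= !eqxx.
  have [->|ne] := eqVneq j i; first by rewrite mul1r subKr subrr.
  have -> : j = ordS i by move: hst; rewrite pred_ordS eq_sym (negbTE ne) => /eqP.
  rewrite eqxx ?(negbTE (hne i)).
  have := c (sQ i) (sH true); rewrite delta_QH // => h.
  by rewrite -[RHS]oppr0 -h; ring.
Qed.

Lemma inU_cocycle_End M : endo M -> mdelta M = 0 -> inU (M - mdelta (mk (htpy_End M))).
Proof.
move=> eM cM; have [EE QQ] := cocycle_End_diag eM cM.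
split=> [|i|i]; first exact: htpy_End_support.
all: rewrite !(entB M) !delta_other ?subr0 ?EE ?QQ //; exact: htpy_End_endo.
Qed.

Definition fold_htpy (Y : MX) (t s : sm) : R :=
  match t, s with
  | inl (inl (inl false)), inl (inl (inl false)) =>
      ent Y (sH false) (sH false) - ent Y (sH true) (sH true)
  | inl (inl (inr i)), inl (inl (inl false)) => ent Y (sE i) (sH false) + ent Y (sE i) (sH true)
  | _, _ => 0
  end.

Lemma fold_htpy_inU Y : inU (mk (fold_htpy Y)).
Proof.
split=> [t s|i|i]; rewrite ?entK //.
by case: t => [[[a|i]|i]|i]; case: s => [[[b|j]|j]|j] //=; try (case: a); try (case: b).
Qed.

Lemma fold_htpy_delta Y : endo Y -> inU (mdelta Y) -> mdelta (mk (fold_htpy Y)) = mdelta Y.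
Proof.
move=> eY [h _ _]; rewrite mdeltaU; last exact: fold_htpy_inU.
apply: mx_eq => t s; rewrite entK.
case hU: (patU t s); last first.
  rewrite h ?hU //.
  by case: t hU => [[[a|i]|i]|i]; case: s => [[[b|j]|j]|j] //=; case: b.
move: hU; case: t => [[[a|i]|i]|i]; case: s => [[[b|j]|j]|j] //= hU;
  try (by rewrite delta_other).
- case: b hU => //= _.
  have := h (sE i) (sH true) isT; rewrite delta_EH // => /eqP.
  by rewrite mulN1r oppr_eq0 subr_eq0 => /eqP EE; rewrite delta_EH // !entK /= EE mul1r subr0.
- case: b hU => //= _.
  have := h (sW i) (sH true) isT; rewrite delta_WH // mulN1r opprK => WW.
  by rewrite delta_WH // WW mulr0 oppr0.
- case: b hU => //= _.
  have := h (sQ i) (sH true) isT; rewrite delta_QH // => QH.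
  rewrite !entK /= delta_QH //; apply/eqP; rewrite -subr_eq0 -QH; apply/eqP; ring.
Qed.

Lemma mqiso_U_End : mqiso inU (fun M => M = 0) endo (fun M => M = 0).
Proof.
apply: mqiso_of.
- exact: inU_comp.
- exact: comp_closed0.
- by move=> q M; apply: supported_comp.
- exact: comp_closed0.
- by move=> A B; apply: supportedB.
- exact: inU_endo.
- by [].
- move=> Z eZ cZ; exists (Z - mdelta (mk (htpy_End Z))), (mk (htpy_End Z)).
  split; first exact: inU_cocycle_End.
  + by rewrite mdeltaB mdelta2 cZ subr0.
  + exact: htpy_End_endo.
  + by rewrite subKr subrr.
move=> X Y uX _ eY /eqP; rewrite subr_eq0 => /eqP eX.
exists (mk (fold_htpy Y)); first exact: fold_htpy_inU.
by rewrite fold_htpy_delta -?eX ?subrr.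
Qed.

(* An element of U whose differential lies in I is balanced: the E_i0 <- H_1
   entry of its differential vanishes. *)
Lemma balanced_of_delta M : inU M -> inI (mdelta M) -> balanced M.
Proof.
move=> uM [h _]; have := h (sE i0) (sH false); rewrite /patI eqxx => /(_ isT).
by rewrite mdeltaU // entK /= => /eqP; rewrite subr_eq0 => /eqP.
Qed.

Lemma inS_of_inU A : inU A -> ent A (sE i0) (sH false) = 0 -> balanced A -> inS A.
Proof.
case=> h a1 a2 e0 e; split => // t s.
case: t => [[[a|i]|i]|i]; case: s => [[[b|j]|j]|j]; try exact: h.
rewrite /= negb_and negbK => /orP[hb|/negPn/eqP ->]; first by apply: h; rewrite /= hb.
by case: b; [apply: h | apply: e0].
Qed.

(* the homotopy moving the E_i0 <- H_1 entry of Z to the diagonal at H_1 *)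
Definition htpy_i0 (Z : MX) (t s : sm) : R :=
  match t, s with
  | inl (inl (inl false)), inl (inl (inl false)) => ent Z (sE i0) (sH false)
  | _, _ => 0
  end.

Lemma htpy_i0_inU Z : inU (mk (htpy_i0 Z)).
Proof.
split=> [t s|i|i]; rewrite ?entK //.
by case: t => [[[a|i]|i]|i]; case: s => [[[b|j]|j]|j] //=; try (case: a); try (case: b).
Qed.

Lemma htpy_i0_delta Z t s : ent (mdelta (mk (htpy_i0 Z))) t s =
  match t, s with
  | inl (inl (inr _)), inl (inl (inl false)) => ent Z (sE i0) (sH false)
  | _, _ => 0
  end.
Proof.
rewrite mdeltaU; last exact: htpy_i0_inU.
rewrite entK; case: t => [[[a|i]|i]|i]; case: s => [[[b|j]|j]|j] //=; try (case: b) => //.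
all: by rewrite !entK /= subr0 // subrr.
Qed.

Definition EH_column (Z : MX) (t s : sm) : R :=
  match t, s with
  | inl (inl (inr i)), inl (inl (inl false)) => ent Z (sE i) (sH false)
  | _, _ => 0
  end.

Lemma EH_column_inU Z : inU (mk (EH_column Z)).
Proof.
split=> [t s|i|i]; rewrite ?entK //.
by case: t => [[[a|i]|i]|i]; case: s => [[[b|j]|j]|j] //=; try (case: a); try (case: b).
Qed.

Lemma EH_column_delta Z : inU Z -> balanced Z -> mdelta Z = mdelta (mk (EH_column Z)).
Proof.
move=> uZ e; rewrite mdeltaU // mdeltaU; last exact: EH_column_inU.
apply: mx_eq => t s; rewrite !entK.
case: t => [[[a|i]|i]|i]; case: s => [[[b|j]|j]|j] //=; try (case: b) => //.
- by rewrite !entK /= e !subrr.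
- by rewrite !entK.
Qed.

Lemma EH_column_htpy_inI Z : inI (mk (EH_column Z) - mdelta (mk (htpy_i0 Z))).
Proof.
split.
  move=> t s; rewrite entB htpy_i0_delta entK.
  case: t => [[[a|i]|i]|i]; case: s => [[[b|j]|j]|j] //=; rewrite ?subrr //;
  case: b => //=; rewrite ?subrr //.
  by rewrite negbK => /eqP ->; rewrite subrr.
by apply: big1 => i _; rewrite entB htpy_i0_delta entK /= subrr.
Qed.

(* The primitive in U of a cocycle of U which bounds modulo I: the defect
   r_i = (X - dY)(Q_i, H_1), which sums to zero, is absorbed telescopically into
   the column E_i <- H_1. *)
Definition htpy_UI (X Y : MX) (t s : sm) : R :=
  match t, s with
  | inl (inl (inl false)), inl (inl (inl false)) =>
      ent Y (sH false) (sH false) - ent Y (sH true) (sH true)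
  | inl (inl (inr i)), inl (inl (inl false)) =>
      ent Y (sE i) (sH false) + tail_sum (fun k => ent (X - mdelta Y) (sQ k) (sH false)) i
  | _, _ => 0
  end.

Lemma htpy_UI_inU X Y : inU (mk (htpy_UI X Y)).
Proof.
split=> [t s|i|i]; rewrite ?entK //.
by case: t => [[[a|i]|i]|i]; case: s => [[[b|j]|j]|j] //=; try (case: a); try (case: b).
Qed.

Lemma htpy_UI_delta X Y : inU X -> mdelta X = 0 -> inU Y -> inI (X - mdelta Y) ->
  mdelta (mk (htpy_UI X Y)) = X.
Proof.
move=> uX cX uY [hI hsum].
have tr := tail_sumP hsum.
have outside t s : ~~ patI t s -> ent X t s = ent (mdelta Y) t s.
  by move=> /hI /eqP; rewrite entB subr_eq0 => /eqP.
have EH_const i : ent X (sE i) (sH false) = ent X (sE i0) (sH false).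
  apply: (ordS_const (f := fun i => ent X (sE i) (sH false))) => {}i.
  have := congr1 (fun M => ent M (sQ i) (sH false)) cX.
  by rewrite mdeltaU // !entK ent0 /= => /eqP; rewrite subr_eq0 => /eqP ->.
have EH_i0 : ent X (sE i0) (sH false) = ent Y (sH false) (sH false) - ent Y (sH true) (sH true).
  by rewrite outside /= ?eqxx // mdeltaU // entK.
rewrite mdeltaU; last exact: htpy_UI_inU.
apply: mx_eq => t s; rewrite entK.
case: t => [[[a|i]|i]|i]; case: s => [[[b|j]|j]|j] /=;
  try by rewrite outside ?mdeltaU ?entK //; try case: a; try case: b.
- case: b; first by rewrite outside ?mdeltaU ?entK.
  by rewrite !entK /= subr0 EH_const EH_i0.
- case: b; first by rewrite outside ?mdeltaU ?entK.
  have := congr1 (fun M => ent M (sQ i) (sH false)) (subrK (mdelta Y) X).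
  have dQ : ent (mdelta Y) (sQ i) (sH false) =
    ent Y (sE i) (sH false) - ent Y (sE (ordS i)) (sH false) by rewrite mdeltaU // entK.
  by rewrite entD dQ => <-; rewrite -(tr i) !entK /=; ring.
Qed.

Lemma mqiso_U_UI : mqiso inU (fun M => M = 0) inU inI.
Proof.
apply: mqiso_of.
- exact: inU_comp.
- exact: comp_closed0.
- exact: inU_comp.
- exact: inI_comp.
- exact: inUB.
- by [].
- by move=> M ->; apply: inI0.
- move=> Z uZ iZ; have eZ := balanced_of_delta uZ iZ.
  exists (Z - mk (EH_column Z)), (mk (htpy_i0 Z)).
  split; first exact/inUB/EH_column_inU.
  + by rewrite mdeltaB -EH_column_delta ?subrr.
  + exact: htpy_i0_inU.
  + by rewrite subKr; apply: EH_column_htpy_inI.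
move=> X Y uX cX uY iXY; exists (mk (htpy_UI X Y)); first exact: htpy_UI_inU.
by rewrite htpy_UI_delta //; apply: subrr.
Qed.

(* S/I -> U/I is a quasi-isomorphism: subtracting the coboundary of [htpy_i0 Z]
   moves a cocycle of U/I into S, and a cocycle of S which bounds modulo I in U
   already lies in I. *)
Lemma balanced_of_cobdry X Y : inS X -> inU Y -> inI (X - mdelta Y) -> balanced Y.
Proof.
case=> hS _ _ _ uY [hI _].
have := hI (sE i0) (sH false); rewrite /patI eqxx => /(_ isT).
rewrite entB mdeltaU // entK /= hS /= ?eqxx // sub0r => /eqP.
by rewrite oppr_eq0 subr_eq0 => /eqP.
Qed.

Lemma mqiso_S_U : mqiso inS inI inU inI.
Proof.
apply: mqiso_of.
- exact: inS_comp.
- exact: inI_comp.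
- exact: inU_comp.
- exact: inI_comp.
- exact: inUB.
- exact: inS_inU.
- by [].
- move=> Z uZ iZ; have eZ := balanced_of_delta uZ iZ.
  have uYZ : inU (Z - mdelta (mk (htpy_i0 Z))) by apply/inUB/inU_delta/htpy_i0_inU.
  have sX : inS (Z - mdelta (mk (htpy_i0 Z))).
    apply: inS_of_inU => //; rewrite /balanced !(entB Z) !htpy_i0_delta ?subrr //.
    by rewrite !subr0.
  exists (Z - mdelta (mk (htpy_i0 Z))), (mk (htpy_i0 Z)).
  split => //; [exact: inI_delta_inS | exact: htpy_i0_inU | by rewrite subKr subrr; apply: inI0].
move=> X Y sX _ uY iXY; exists 0; first exact: inS0.
have iY := inI_delta_balanced uY (balanced_of_cobdry sX uY iXY).
by rewrite mdelta0 subr0 -(subrK (mdelta Y) X); apply: inID.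
Qed.

Lemma U_dg_subalg : dg_subalg (embP inU).
Proof.
split.
- by move=> x [M uM ->]; apply/emb_inEnd/inU_endo.
- exact: embP_submod inU_endo inU0 inUD inUZ inU_comp inU_delta.
- exact/embP_one/inU1.
- exact: embP_mul inU_endo inU_endo inUM.
Qed.

Lemma I_dg_ideal : dg_ideal (embP inU) (embP inI).
Proof.
split.
- exact: psubset_embP inI_inU.
- exact: embP_submod inI_endo inI0 inID inIZ inI_comp inI_delta.
- exact: embP_mul inU_endo inI_endo inI_mulUl.
- exact: embP_mul inI_endo inU_endo inI_mulUr.
Qed.

Lemma S_dg_subalg : [/\ psubset (embP inI) (embP inS), psubset (embP inS) (embP inU),
    dg_submod (embP inS)
  & embP inS (amb1 R) /\ (forall x y, embP inS x -> embP inS y -> embP inS (ambM x y))].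
Proof.
split; [exact: psubset_embP inI_inS | exact: psubset_embP inS_inU | | split].
- exact: embP_submod inS_endo inS0 inSD inSZ inS_comp inS_delta.
- exact/embP_one/inS1.
- exact: embP_mul inS_endo inS_endo inSM.
Qed.

Lemma S_delta_inI x : embP inS x -> embP inI (delta x).
Proof. by apply: embP_delta; [apply: inS_endo | apply: inI_delta_inS]. Qed.

End EndJ.

Theorem proposition5p8 (R : idomainType) (hR : is_pid R) (n : nat) (hn : (2 <= n)%N) :
  exists U I S : amb n R -> Prop,
    (* U is a dg subalgebra of End J, I a two-sided dg ideal of U *)
    (dg_subalg U /\ dg_ideal U I) /\
    (* S/I is a dg subalgebra of U/I with zero differential (playing the role of H(U/I)) *)
    ([/\ psubset I S, psubset S U, dg_submod S
       & S (@amb1 n R) /\ (forall x y, S x -> S y -> S (ambM x y))]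
     /\ (forall x, S x -> I (delta x))) /\
    [/\ qiso U (@zeroP n R) (@inEnd n R) (@zeroP n R),  (* End J <-- U *)
        qiso U (@zeroP n R) U I                         (* U -->> U/I *)
      & qiso S I U I].                                  (* U/I <-- S/I = H(U/I) *)
Proof.
have rU := realizes_embP (@inU_endo n R).
have rI := realizes_embP (@inI_endo n R hn).
have rS := realizes_embP (@inS_endo n R hn).
exists (embP (@inU n R)), (embP (inI hn)), (embP (inS hn)).
split; first by split; [exact: U_dg_subalg | exact: I_dg_ideal].
split; first by split; [exact: S_dg_subalg | exact: S_delta_inI].
have r0 := realizes_zero n R.
split.
- exact: (qiso_emb rU r0 (realizes_inEnd _ _) r0 (mqiso_U_End _ hn)).
- exact: (qiso_emb rU r0 rU rI (mqiso_U_UI _ hn)).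
- exact: (qiso_emb rS rI rU rI (mqiso_S_U _ hn)).
Qed.
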